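(* Let $M$ be a retract-compatible Coxeter matrix over a finite set $S$ with $|S|\ge2$, and let $A_S$ be its associated Artin group. Then for every $x\in S$ there exists an ordinary retraction $\psi_x:A_S\to A_{S\setminus\{x\}}$ such that $\psi_x(x)\in S\setminus\{x\}$ (in particular $\psi_x(x)\neq 1$).
   Context: A Coxeter matrix over a finite set $S$ is a matrix $M=(m_{s,t})_{s,t\in S}$ with entries in $\mathbb{N}\cup\{\infty\}$, $m_{s,s}=1$, and $m_{s,t}=m_{t,s}\ge 2$ for $s\neq t$. Write $\Pi(s,t,m)$ for the alternating word $sts\cdots$ of length $m$. The Artin group is $A_S=\langle S\mid \Pi(s,t,m_{s,t})=\Pi(t,s,m_{s,t})$ for $s\neq t$, $m_{s,t}\neq\infty\rangle$. For $X\subseteq S$, $A_X$ is the subgroup generated by $X$. $M$ is retract-compatible if all its entries are finite odd numbers and for every triple $a,b,c\in S$ of pairwise distinct elements, up to permuting $a,b,c$, $m_{a,b}=m_{a,c}$ and $m_{b,c}$ divides $m_{a,b}$. A retraction $\varphi:A_S\to A_X$ (homomorphism restricting to the identity on $A_X$) is ordinary if $\varphi(x)=x$ for all $x\in X$ and $\varphi(y)\in X\cup\{1\}$ for all $y\in S\setminus X$. *)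

From mathcomp Require Import all_boot.
Set Implicit Arguments. Unset Strict Implicit. Unset Printing Implicit Defensive.

Section Artin.
Variable S : finType.

(* A Coxeter matrix: entries in N ∪ {∞}; None stands for ∞. *)
Definition coxeter_matrix (m : S -> S -> option nat) : Prop :=
  [/\ forall s, m s s = Some 1,
      forall s t, m s t = m t s &
      forall s t, s != t -> match m s t with Some k => 2 <= k | None => true end].

(* letters: (s, false) = s, (s, true) = s^-1 *)
Definition letter := (S * bool)%type.
Definition word := seq letter.

Definition Pi (s t : S) (k : nat) : word :=
  mkseq (fun i => (if odd i then t else s, false)) k.

Inductive artin_eq (m : S -> S -> option nat) : word -> word -> Prop :=
| ae_refl w : artin_eq m w w
| ae_sym w1 w2 : artin_eq m w1 w2 -> artin_eq m w2 w1
| ae_trans w1 w2 w3 : artin_eq m w1 w2 -> artin_eq m w2 w3 -> artin_eq m w1 w3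
| ae_free u v s b : artin_eq m (u ++ [:: (s, b); (s, ~~ b)] ++ v) (u ++ v)
| ae_rel u v s t k : s != t -> m s t = Some k ->
    artin_eq m (u ++ Pi s t k ++ v) (u ++ Pi t s k ++ v).

Definition in_sub (m : S -> S -> option nat) (X : {set S}) (w : word) : Prop :=
  exists w', all (fun l : letter => l.1 \in X) w' /\ artin_eq m w w'.

Definition is_hom (m : S -> S -> option nat) (phi : word -> word) : Prop :=
  (forall w w', artin_eq m w w' -> artin_eq m (phi w) (phi w')) /\
  (forall u v, artin_eq m (phi (u ++ v)) (phi u ++ phi v)).

Definition retraction (m : S -> S -> option nat) (X : {set S}) (phi : word -> word) : Prop :=
  [/\ is_hom m phi,
      forall w, in_sub m X (phi w) &
      forall w, in_sub m X w -> artin_eq m (phi w) w].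

Definition ordinary_retraction (m : S -> S -> option nat) (X : {set S}) (phi : word -> word) : Prop :=
  [/\ retraction m X phi,
      forall x, x \in X -> artin_eq m (phi [:: (x, false)]) [:: (x, false)] &
      forall y, y \notin X ->
        (exists2 z, z \in X & artin_eq m (phi [:: (y, false)]) [:: (z, false)]) \/
        artin_eq m (phi [:: (y, false)]) [::]].

Definition retract_compatible (m : S -> S -> option nat) : Prop :=
  (forall s t, exists2 k, m s t = Some k & odd k) /\
  (forall a b c, a != b -> a != c -> b != c ->
     let P a b c := exists p q, [/\ m a b = Some p, m a c = Some p,
                                    m b c = Some q & q %| p] in
     P a b c \/ P a c b \/ P b a c \/ P b c a \/ P c a b \/ P c b a).
End Artin.

From mathcomp Require Import all_boot.
Set Implicit Arguments. Unset Strict Implicit. Unset Printing Implicit Defensive.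

(* Fix x and let s <> x minimise m(x,s).  The substitution x |-> s, fixing
   every other generator, is an ordinary retraction onto A_{S\{x}} as soon as
   every Artin relation survives it, i.e. as soon as Pi(s,b,k) = Pi(b,s,k) in
   A_S for k = m(x,b).  Retract-compatibility of the triangle {x,s,b} and the
   minimality of m(x,s) give m(s,b) | m(x,b); as m(s,b) is odd, the relation
   of length m(s,b) implies the one of every multiple length. *)

Section ArtinWords.
Variables (S : finType) (m : S -> S -> option nat).

Lemma artin_eq_ctx u v (w1 w2 : word S) :
  artin_eq m w1 w2 -> artin_eq m (u ++ w1 ++ v) (u ++ w2 ++ v).
Proof.
elim=> {w1 w2} [w | w1 w2 _ IH | w1 w2 w3 _ IH1 _ IH2 | u' v' s b | u' v' s t k st mst].
- exact: ae_refl.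
- exact: ae_sym.
- exact: ae_trans IH1 IH2.
- by have := ae_free m (u ++ u') (v' ++ v) s b; rewrite -!catA.
- by have := ae_rel (u ++ u') (v' ++ v) st mst; rewrite -!catA.
Qed.

Lemma artin_eq_cat (a a' b b' : word S) :
  artin_eq m a a' -> artin_eq m b b' -> artin_eq m (a ++ b) (a' ++ b').
Proof.
move=> eq_a eq_b; apply: (@ae_trans _ _ _ (a' ++ b)).
- by have := artin_eq_ctx [::] b eq_a.
- by have := artin_eq_ctx a' [::] eq_b; rewrite !cats0.
Qed.

Lemma Pi_add (s t : S) n j :
  Pi s t (n + j) = Pi s t n ++ (if odd n then Pi t s j else Pi s t j).
Proof.
rewrite /Pi /mkseq iotaD map_cat add0n -[in iota n j](addn0 n) iotaDl -map_comp.
by congr (_ ++ _); case: ifP => odd_n; apply: eq_map => i /=; rewrite oddD odd_n; case: odd.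
Qed.

Lemma artin_eq_Pi_mul (s t : S) k j : odd k ->
  artin_eq m (Pi s t k) (Pi t s k) -> artin_eq m (Pi s t (j * k)) (Pi t s (j * k)).
Proof.
move=> odd_k braid; elim: j => [|j IH]; first exact: ae_refl.
by rewrite mulSn !Pi_add odd_k; apply: artin_eq_cat => //; apply: ae_sym.
Qed.

Lemma artin_eq_Pi_dvd (s t : S) k k' : s != t -> m s t = Some k -> odd k ->
  k %| k' -> artin_eq m (Pi s t k') (Pi t s k').
Proof.
move=> st mst odd_k /dvdnP[j ->]; apply: artin_eq_Pi_mul => //.
by have := ae_rel [::] [::] st mst; rewrite /= !cats0.
Qed.

Definition relabel (f : S -> S) (w : word S) : word S := [seq (f l.1, l.2) | l <- w].

Lemma relabel_Pi f (s t : S) k : relabel f (Pi s t k) = Pi (f s) (f t) k.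
Proof. by rewrite /relabel /Pi /mkseq -map_comp; apply: eq_map => i /=; case: odd. Qed.

Definition preserves_relations (f : S -> S) :=
  forall a b k, a != b -> m a b = Some k ->
    artin_eq m (Pi (f a) (f b) k) (Pi (f b) (f a) k).

Lemma relabel_artin_eq f : preserves_relations f ->
  forall w w', artin_eq m w w' -> artin_eq m (relabel f w) (relabel f w').
Proof.
move=> f_rel w w'.
elim=> {w w'} [w | w1 w2 _ IH | w1 w2 w3 _ IH1 _ IH2 | u v s b | u v s t k st mst].
- exact: ae_refl.
- exact: ae_sym.
- exact: ae_trans IH1 IH2.
- by rewrite /relabel !map_cat; apply: ae_free.
- by rewrite /relabel !map_cat -!/(relabel f _) !relabel_Pi; apply/artin_eq_ctx/f_rel.
Qed.

Lemma relabel_ordinary_retraction (X : {set S}) f :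
  preserves_relations f -> (forall t, f t \in X) -> {in X, f =1 id} ->
  ordinary_retraction m X (relabel f).
Proof.
move=> f_rel fX f_id; split; first split.
- split; first exact: relabel_artin_eq.
  by move=> u v; rewrite /relabel map_cat; apply: ae_refl.
- move=> w; exists (relabel f w); split; last exact: ae_refl.
  by apply/allP=> _ /mapP[l _ ->]; apply: fX.
- move=> w [w' [w'X eq_ww']]; apply: ae_trans (relabel_artin_eq f_rel eq_ww') _.
  rewrite /relabel map_id_in; first exact: ae_sym.
  by case=> t b /(allP w'X) /= tX; rewrite f_id.
- by move=> t tX; rewrite /relabel /= f_id //; apply: ae_refl.
- by move=> y _; left; exists (f y) => //; apply: ae_refl.
Qed.

End ArtinWords.

Section RetractCompatible.
Variables (S : finType) (m : S -> S -> option nat).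
Hypotheses (m_cox : coxeter_matrix m) (m_rc : retract_compatible m).

Lemma retract_compatible_dvd a b c p q r :
  a != b -> a != c -> b != c ->
  m a b = Some p -> m a c = Some q -> m b c = Some r -> p <= q -> r %| q.
Proof.
case: m_cox m_rc => _ m_sym _ [m_odd m_tri] ab ac bc mab mac mbc le_pq.
have mba : m b a = Some p by rewrite m_sym.
have mca : m c a = Some q by rewrite m_sym.
have mcb : m c b = Some r by rewrite m_sym.
have odd_p : odd p by have [p' + ?] := m_odd a b; rewrite mab => -[->].
case: (m_tri a b c ab ac bc) => /=; [|move=> [|[|[|[|]]]]] => -[p' [q' [E1 E2 E3 dvd]]];
  move: E1 E2 E3; rewrite ?mab ?mac ?mbc ?mba ?mca ?mcb => -[?] [?] [?]; subst => //.
(* apex b: m(a,c) divides m(a,b) = m(b,c), while m(a,b) <= m(a,c) *)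
all: by have -> : p' = q' by apply/anti_leq; rewrite le_pq dvdn_leq // odd_gt0.
Qed.

Variable x : S.

Definition collapse (s t : S) : S := if t == x then s else t.

Lemma collapse_preserves_relations s : s != x ->
  (forall t p q, t != x -> m x s = Some p -> m x t = Some q -> p <= q) ->
  preserves_relations m (collapse s).
Proof.
case: m_cox m_rc => _ m_sym _ [m_odd _] sx s_min.
have braid_s b k : b != x -> m x b = Some k -> artin_eq m (Pi s b k) (Pi b s k).
  move=> bx mxb; have [-> | sb] := eqVneq s b; first exact: ae_refl.
  have [p mxs _] := m_odd x s; have [r msb odd_r] := m_odd s b.
  apply: (artin_eq_Pi_dvd sb msb odd_r).
  have le_p_k := s_min _ _ _ bx mxs mxb.
  by apply: (retract_compatible_dvd _ _ sb mxs mxb msb le_p_k); rewrite eq_sym.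
rewrite /collapse => a b k ab mab.
case: (eqVneq a x) ab mab => [-> | ax]; case: (eqVneq b x) => [-> | bx] //.
- by move=> _ mxb; apply: braid_s.
- by move=> _; rewrite m_sym => mxa; apply/ae_sym/braid_s.
- by move=> ab mab; have := ae_rel [::] [::] ab mab; rewrite /= !cats0.
Qed.

End RetractCompatible.

Lemma exists_row_argmin (S : finType) (m : S -> S -> option nat) (x : S) :
  2 <= #|S| -> exists2 s, s != x &
    forall t p q, t != x -> m x s = Some p -> m x t = Some q -> p <= q.
Proof.
move=> card_S; have [t0 t0x] : exists t0, t0 != x.
  have /card_gt0P[t0] : 0 < #|[set~ x]| by rewrite cardsC1 -ltnS (ltn_predK card_S).
  by rewrite in_setC1; exists t0.
case: (@arg_minnP _ t0 (predC1 x) (fun t => odflt 0 (m x t)) t0x) => s sx s_min.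
by exists s => // t p q tx mxs mxt; have := s_min t tx; rewrite mxs mxt.
Qed.

Theorem lemma3p9 (S : finType) (m : S -> S -> option nat) :
  coxeter_matrix m -> retract_compatible m -> 2 <= #|S| ->
  forall x : S, exists phi : word S -> word S,
    ordinary_retraction m [set~ x] phi /\
    exists2 s, s \in [set~ x] & artin_eq m (phi [:: (x, false)]) [:: (s, false)].
Proof.
move=> m_cox m_rc card_S x.
have [s sx s_min] := exists_row_argmin m x card_S.
have sX : s \in [set~ x] by rewrite in_setC1.
exists (relabel (collapse x s)); split.
- apply: relabel_ordinary_retraction.
  + exact: collapse_preserves_relations.
  + by move=> t; rewrite /collapse; case: eqVneq => // tx; rewrite in_setC1.
  + by move=> t; rewrite in_setC1 /collapse => /negbTE ->.
- by exists s => //; rewrite /relabel /collapse /= eqxx; apply: ae_refl.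
Qed.
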